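(* Let $p\ge 2$, $w\ge 0$, $z\in\mathbb{R}^{p-1}$. For $\lambda>0$ let $(\hat\beta^+(\lambda),\hat\beta^-(\lambda),\hat\theta(\lambda))$ be the unique solution of \[ \min_{\beta^\pm\in\mathbb{R},\,\theta\in\mathbb{R}^{p-1}}\ \frac12\bigl(w-(\beta^+-\beta^-)\bigr)^2+\frac12\|z-\theta\|_2^2+\lambda(\beta^++\beta^-)+\lambda\|\theta\|_1 \quad\text{s.t. } \beta^+\ge0,\ \beta^-\ge0,\ \|\theta\|_1\le\beta^++\beta^-, \] and write $\hat\beta=\hat\beta^+-\hat\beta^-$. Define $\tilde\lambda_1=\min\{\lambda\ge0:\|S(z,\lambda)\|_1+\lambda\le w\}$, $\tilde\lambda_3=\max\{\lambda\ge0:\|S(z,2\lambda)\|_1\ge w\}$ and $\tilde\lambda_4=(w+\|z\|_\infty)/2$. Then for $\lambda>0$: 1. (Big main effect) If $\|z\|_\infty\le\|z\|_1<w$: for $\lambda\ge w$, $\hat\beta=0$ and $\hat\theta=0$; for $\tilde\lambda_1\le\lambda<w$, $\hat\beta=w-\lambda$ and $\hat\theta=S(z,\lambda)$; for $\lambda<\tilde\lambda_1$, there is $\hat\alpha(\lambda)>0$ with $\hat\beta=w-\lambda+\hat\alpha(\lambda)$ and $\hat\theta=S(z,\lambda+\hat\alpha(\lambda))$. 2. (Moderate main effect) If $\|z\|_\infty\le w\le\|z\|_1$: for $\lambda\ge w$, $\hat\beta=0$ and $\hat\theta=0$; for $\tilde\lambda_1\le\lambda<w$, $\hat\beta=w-\lambda$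 and $\hat\theta=S(z,\lambda)$; for $\tilde\lambda_3\le\lambda<\tilde\lambda_1$, there is $\hat\alpha(\lambda)>0$ with $\hat\beta=w-\lambda+\hat\alpha(\lambda)$ and $\hat\theta=S(z,\lambda+\hat\alpha(\lambda))$; for $\lambda<\tilde\lambda_3$, $\hat\beta=w$ and $\hat\theta=S(z,2\lambda)$. 3. (Big interaction) If $w<\|z\|_\infty\le\|z\|_1$: for $\lambda\ge\tilde\lambda_4$, $\hat\beta=0$ and $\hat\theta=0$; for $\tilde\lambda_3\le\lambda<\tilde\lambda_4$, there is $\hat\alpha(\lambda)>0$ with $\hat\beta=w-\lambda+\hat\alpha(\lambda)$ and $\hat\theta=S(z,\lambda+\hat\alpha(\lambda))$; for $\lambda<\tilde\lambda_3$, $\hat\beta=w$ and $\hat\theta=S(z,2\lambda)$.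
   Context: $S(x,t)=\mathrm{sign}(x)\cdot(|x|-t)_+$ is the soft-thresholding function, applied componentwise to vectors. The solution of the displayed problem exists and is unique for every $\lambda>0$. Conventions: the minimum of an empty set is $+\infty$, the maximum of an empty set is $-\infty$, and the maximum of a set unbounded above is $+\infty$. *)

From HB Require Import structures.
From mathcomp Require Import all_boot all_order all_algebra.
From mathcomp Require Import classical_sets reals ereal.
Set Implicit Arguments. Unset Strict Implicit. Unset Printing Implicit Defensive.
Import Order.TTheory GRing.Theory Num.Theory.
Local Open Scope classical_set_scope.
Local Open Scope ring_scope.

Section Defs.
Variable R : realType.

Definition soft (x t : R) : R := Num.sg x * Num.max (`|x| - t) 0.

Definition softv n (z : 'I_n -> R) (t : R) : 'I_n -> R := fun i => soft (z i) t.

Definition l1norm n (v : 'I_n -> R) : R := \sum_(i < n) `|v i|.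
Definition linfnorm n (v : 'I_n -> R) : R := \big[Num.max/0]_(i < n) `|v i|.

Definition objective n (w : R) (z : 'I_n -> R) (lam : R)
  (bp bm : R) (th : 'I_n -> R) : R :=
  2^-1 * (w - (bp - bm)) ^+ 2 + 2^-1 * (\sum_(i < n) (z i - th i) ^+ 2)
  + lam * (bp + bm) + lam * l1norm th.

Definition feasible n (bp bm : R) (th : 'I_n -> R) : Prop :=
  0 <= bp /\ 0 <= bm /\ l1norm th <= bp + bm.

Definition is_solution n (w : R) (z : 'I_n -> R) (lam : R)
  (bp bm : R) (th : 'I_n -> R) : Prop :=
  feasible bp bm th /\
  forall bp' bm' (th' : 'I_n -> R), feasible bp' bm' th' ->
    objective w z lam bp bm th <= objective w z lam bp' bm' th'.

(* tilde lambda_1 = min { l >= 0 : ||S(z,l)||_1 + l <= w }  (+oo if empty).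
   The set is closed, so the infimum is the minimum when the set is nonempty. *)
Definition tlam1 n (w : R) (z : 'I_n -> R) : \bar R :=
  ereal_inf [set l%:E | l in [set l : R | 0 <= l /\ l1norm (softv z l) + l <= w]].

(* tilde lambda_3 = max { l >= 0 : ||S(z,2l)||_1 >= w }  (-oo if empty,
   +oo if unbounded above). The set is closed, so sup = max when bounded. *)
Definition tlam3 n (w : R) (z : 'I_n -> R) : \bar R :=
  ereal_sup [set l%:E | l in [set l : R | 0 <= l /\ w <= l1norm (softv z (2 * l))]].

Definition tlam4 n (w : R) (z : 'I_n -> R) : R := (w + linfnorm z) / 2.

End Defs.

(* The objective is strongly convex in (beta, theta), so a feasible point satisfying
   the first-order optimality conditions is the unique solution.  Apart from the zero
   solution (certified with the l1 weight ||z||_inf), the candidate is always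
   beta = w - lam + a, theta = S(z, lam + a), where a in [0, lam] is the multiplier of
   the constraint ||theta||_1 <= beta^+ + beta^-: a = 0 when the constraint is slack,
   a = lam when beta is not shrunk at all, and otherwise a solves
   ||S(z, lam + a)||_1 = w - lam + a, which has a root by the intermediate value
   theorem.  Which case occurs is read off tlam1 and tlam3 using that
   a |-> ||S(z, a)||_1 is nonincreasing, convex and Lipschitz. *)

From HB Require Import structures.
From mathcomp Require Import all_boot all_order all_algebra.
From mathcomp Require Import classical_sets reals ereal.
From mathcomp Require Import boolp topology normedtype.
From mathcomp Require Import lra ring.
Import Order.TTheory GRing.Theory Num.Theory.
Import numFieldNormedType.Exports.
Local Open Scope ring_scope.
Set Implicit Arguments. Unset Strict Implicit.

Section SoftThresholding.
Variable R : realType.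
Implicit Types x a b c t K : R.

Definition hinge c a := Num.max (c - a) 0.

Lemma normr_soft x a : 0 <= a -> `|soft x a| = hinge `|x| a.
Proof.
move=> a0; rewrite /soft /hinge normrM normr_sg ger0_norm ?le_max ?lexx ?orbT //.
have [->|] := eqVneq x 0; last by rewrite mul1r.
by rewrite mul0r normr0 sub0r maxEle ifT // oppr_le0.
Qed.

Lemma soft_residual x a : 0 <= a ->
  `|x - soft x a| <= a /\ (x - soft x a) * soft x a = a * `|soft x a|.
Proof.
move=> a0; rewrite (normr_soft x a0) /hinge /soft.
have [x0|x0|->] := ltrgtP x 0.
- rewrite ltr0_sg // (ltr0_norm x0) maxEle.
  case: (leP (- x - a) 0) => h.
  + by rewrite mulr0 subr0 ltr0_norm //; split; lra.
  + have -> : x - -1 * (- x - a) = - a by ring.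
    by rewrite normrN (ger0_norm a0); split => //; ring.
- rewrite gtr0_sg // mul1r (gtr0_norm x0) maxEle.
  case: (leP (x - a) 0) => h.
  + by rewrite subr0 !mulr0 (gtr0_norm x0); split; lra.
  + have -> : x - (x - a) = a by ring.
    by rewrite (ger0_norm a0); split => //; ring.
- by rewrite sgr0 !mul0r subr0 normr0 sub0r maxEle ifT ?mulr0 // oppr_le0.
Qed.

Lemma hinge_ge0 c a : 0 <= hinge c a.
Proof. by rewrite /hinge le_max lexx orbT. Qed.

Lemma hinge_ge c a : c - a <= hinge c a.
Proof. by rewrite /hinge le_max lexx. Qed.

Lemma hinge_nonincreasing c a b : a <= b -> hinge c b <= hinge c a.
Proof. by move=> ab; apply: le_max2 => //; lra. Qed.

Lemma hinge_lipschitz c a b : `|hinge c a - hinge c b| <= `|a - b|.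
Proof.
wlog ab : a b / a <= b.
  by move=> hw; case: (leP a b) => [/hw //|/ltW/hw]; rewrite distrC [`|b - a|]distrC.
rewrite (ler0_norm (x := a - b)) ?subr_le0 // /hinge !maxEle.
by case: (leP (c - a) 0) => ?; case: (leP (c - b) 0) => ?;
  rewrite ler_norml; apply/andP; split; lra.
Qed.

Lemma hinge_convex c a x b : a <= x -> x <= b ->
  (b - a) * hinge c x <= (b - x) * hinge c a + (x - a) * hinge c b.
Proof.
move=> ax xb.
have p1 : (b - x) * (c - a) <= (b - x) * hinge c a by apply: ler_wpM2l; [lra | exact: hinge_ge].
have p2 : (x - a) * (c - b) <= (x - a) * hinge c b by apply: ler_wpM2l; [lra | exact: hinge_ge].
have p3 : 0 <= (b - x) * hinge c a by apply: mulr_ge0; [lra | exact: hinge_ge0].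
have p4 : 0 <= (x - a) * hinge c b by apply: mulr_ge0; [lra | exact: hinge_ge0].
rewrite {1}/hinge maxEle; case: ifP => _; first by rewrite mulr0; lra.
have -> : (b - a) * (c - x) = (b - x) * (c - a) + (x - a) * (c - b) by ring.
lra.
Qed.

Lemma prox_abs_growth x t t' K : `|x - t| <= K -> (x - t) * t = K * `|t| ->
  2^-1 * (x - t) ^+ 2 + 2^-1 * (t' - t) ^+ 2 + K * `|t| <= 2^-1 * (x - t') ^+ 2 + K * `|t'|.
Proof.
move=> res_le res_subgrad.
have cross : (x - t) * t' <= K * `|t'|.
  by apply: (le_trans (ler_norm _)); rewrite normrM; apply: ler_wpM2r.
have -> : 2^-1 * (x - t') ^+ 2
    = 2^-1 * (x - t) ^+ 2 + 2^-1 * (t' - t) ^+ 2 - (x - t) * t' + (x - t) * t by field.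
lra.
Qed.

End SoftThresholding.

Section Certificate.
Variables (R : realType) (n : nat) (w lam : R) (z : 'I_n -> R).
Variables (bp0 bm0 K : R) (th0 : 'I_n -> R).

(* [th0] minimises the theta-part of the objective for the l1 weight [K], and
   [outer_vi] is the first-order condition of the remaining convex problem in
   (beta, ||theta||_1, beta^+ + beta^-). *)
Hypothesis residual_le : forall i, `|z i - th0 i| <= K.
Hypothesis residual_subgrad : forall i, (z i - th0 i) * th0 i = K * `|th0 i|.
Hypothesis outer_vi : forall b s t : R, `|b| <= t -> 0 <= s <= t ->
  0 <= - (w - (bp0 - bm0)) * (b - (bp0 - bm0)) + K * (l1norm th0 - s)
       + lam * (t - (bp0 + bm0)) + lam * (s - l1norm th0).

Lemma objective_quadratic_growth bp bm (th : 'I_n -> R) : feasible bp bm th ->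
  objective w z lam bp0 bm0 th0 + 2^-1 * ((bp - bm) - (bp0 - bm0)) ^+ 2
    + 2^-1 * (\sum_i (th i - th0 i) ^+ 2) <= objective w z lam bp bm th.
Proof.
move=> [bp_ge0 [bm_ge0 l1_le]].
have coords : \sum_i (2^-1 * (z i - th0 i) ^+ 2 + 2^-1 * (th i - th0 i) ^+ 2 + K * `|th0 i|)
    <= \sum_i (2^-1 * (z i - th i) ^+ 2 + K * `|th i|).
  by apply: ler_sum => i _; apply: prox_abs_growth.
rewrite !big_split /= -!mulr_sumr in coords.
have l1_ge0 : 0 <= l1norm th by apply: sumr_ge0 => i _.
have beta_le : `|bp - bm| <= bp + bm by rewrite ler_norml; apply/andP; split; lra.
have := @outer_vi _ (l1norm th) _ beta_le (ltac:(apply/andP; split; lra)).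
rewrite /objective /l1norm in coords l1_ge0 l1_le * => vi.
have -> : 2^-1 * (w - (bp - bm)) ^+ 2 = 2^-1 * (w - (bp0 - bm0)) ^+ 2
    + 2^-1 * ((bp - bm) - (bp0 - bm0)) ^+ 2
    - (w - (bp0 - bm0)) * ((bp - bm) - (bp0 - bm0)) by field.
lra.
Qed.

Lemma solution_eq_certificate bp bm (th : 'I_n -> R) :
  feasible bp0 bm0 th0 -> is_solution w z lam bp bm th ->
  bp - bm = bp0 - bm0 /\ th = th0.
Proof.
move=> feas0 [feas opt].
have le_opt := opt _ _ _ feas0.
have growth := objective_quadratic_growth feas.
have sq_ge0 : 0 <= ((bp - bm) - (bp0 - bm0)) ^+ 2 by apply: sqr_ge0.
have sum_ge0 : 0 <= \sum_i (th i - th0 i) ^+ 2 by apply: sumr_ge0 => i _; apply: sqr_ge0.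
have beta_eq : ((bp - bm) - (bp0 - bm0)) ^+ 2 = 0 by lra.
have theta_eq : \sum_i (th i - th0 i) ^+ 2 = 0 by lra.
split; first by apply/eqP; rewrite -subr_eq0 -sqrf_eq0 beta_eq.
apply: funext => i; apply/eqP; rewrite -subr_eq0 -sqrf_eq0; apply/eqP.
exact: (psumr_eq0P (fun j _ => sqr_ge0 _) theta_eq).
Qed.

End Certificate.

Section SoftL1.
Variables (R : realType) (n : nat) (z : 'I_n -> R).

(* Equal to [l1norm (softv z a)] only for [a >= 0], but convex and Lipschitz on all of R. *)
Definition soft_l1 (a : R) : R := \sum_i hinge `|z i| a.

Lemma l1norm_softv a : 0 <= a -> l1norm (softv z a) = soft_l1 a.
Proof. by move=> a0; apply: eq_bigr => i _; rewrite normr_soft. Qed.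

Lemma soft_l1_ge0 a : 0 <= soft_l1 a.
Proof. by apply: sumr_ge0 => i _; apply: hinge_ge0. Qed.

Lemma soft_l1_0 : soft_l1 0 = l1norm z.
Proof.
apply: eq_bigr => i _; rewrite /hinge subr0.
by apply/max_idPl; rewrite normr_ge0.
Qed.

Lemma soft_l1_nonincreasing a b : a <= b -> soft_l1 b <= soft_l1 a.
Proof. by move=> ab; apply: ler_sum => i _; apply: hinge_nonincreasing. Qed.

Lemma soft_l1_lipschitz a b : `|soft_l1 a - soft_l1 b| <= n%:R * `|a - b|.
Proof.
rewrite /soft_l1 -sumrB; apply: (le_trans (ler_norm_sum _ _ _)).
rewrite mulr_natl -[n in _ *+ n]card_ord -sumr_const.
by apply: ler_sum => i _; apply: hinge_lipschitz.
Qed.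

Lemma soft_l1_convex a x b : a <= x -> x <= b ->
  (b - a) * soft_l1 x <= (b - x) * soft_l1 a + (x - a) * soft_l1 b.
Proof.
move=> ax xb; rewrite /soft_l1 !mulr_sumr -big_split.
by apply: ler_sum => i _; apply: hinge_convex.
Qed.

Lemma soft_l1_eq0 a : linfnorm z <= a -> soft_l1 a = 0.
Proof.
move=> za; apply: big1 => i _; apply/max_idPr; rewrite subr_le0.
by apply: le_trans za; apply: (le_bigmax _ (fun i => `|z i|)).
Qed.

Lemma linfnorm_le_soft_l1 a : 0 <= a -> linfnorm z <= soft_l1 a + a.
Proof.
move=> a0; apply: bigmax_le => [|i _]; first by have := soft_l1_ge0 a; lra.
have := hinge_ge `|z i| a; have : hinge `|z i| a <= soft_l1 a.
  by rewrite /soft_l1 (bigD1 i) //= lerDl; apply: sumr_ge0 => j _; apply: hinge_ge0.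
lra.
Qed.

(* When [linfnorm z <= w], the set defining [tlam1] is an interval ending at [w]. *)
Lemma soft_l1_add_le_between w a x : linfnorm z <= w -> a <= x -> x <= w ->
  soft_l1 a + a <= w -> soft_l1 x + x <= w.
Proof.
move=> zw ax xw aw.
have [a_eq_w|a_ne_w] := eqVneq a w.
  have -> : x = w by apply/le_anti; rewrite xw -a_eq_w ax.
  by rewrite (soft_l1_eq0 zw) add0r.
have := soft_l1_convex ax xw; rewrite (soft_l1_eq0 zw) mulr0 addr0 => conv.
have : (w - x) * soft_l1 a <= (w - x) * (w - a) by apply: ler_wpM2l; lra.
move=> le_wa; have : (w - a) * (soft_l1 x + x - w) <= 0 by lra.
rewrite pmulr_rle0; first by lra.
by rewrite subr_gt0 lt_neqAle a_ne_w (le_trans ax xw).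
Qed.

End SoftL1.

Lemma lipschitz_continuous (R : realType) (f : R -> R) (L : R) : 0 <= L ->
  (forall x y, `|f x - f y| <= L * `|x - y|) -> continuous f.
Proof.
move=> L_ge0 f_lip; have L1_gt0 : 0 < L + 1 by lra.
move=> x; apply/cvgrPdist_lt => e e0; apply/nbhs_ballP.
exists (e / (L + 1)); first by rewrite /= divr_gt0.
move=> y; rewrite /ball /= ltr_pdivlMr // => xy.
apply: (le_lt_trans (f_lip x y)); apply: le_lt_trans xy.
by rewrite mulrC ler_wpM2l // lerDl.
Qed.

Lemma lipschitz_gt_near (R : realType) (f : R -> R) (L x c : R) : 0 <= L ->
  (forall x y, `|f x - f y| <= L * `|x - y|) -> c < f x ->
  exists2 d, 0 < d & forall y, `|x - y| <= d -> c < f y.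
Proof.
move=> L_ge0 f_lip cfx; have L1_gt0 : 0 < L + 1 by lra.
set d := (f x - c) / (L + 1).
have d_gt0 : 0 < d by rewrite divr_gt0 // subr_gt0.
have gap : f x - c = L * d + d.
  by rewrite -[f x - c](mulfVK (lt0r_neq0 L1_gt0)) -/d; ring.
exists d => // y xy; have := ler_wpM2l L_ge0 xy.
have := f_lip x y; rewrite ler_norml => /andP[_]; lra.
Qed.

Lemma soft_l1_shift_root (R : realType) n (z : 'I_n -> R) (w lam : R) : 0 < lam ->
  w < soft_l1 z lam + lam -> soft_l1 z (2 * lam) <= w ->
  exists a, [/\ 0 < a, a <= lam & soft_l1 z (lam + a) = w - lam + a].
Proof.
move=> lam_gt0 at0 atlam.
pose g a := soft_l1 z (lam + a) - (w - lam + a).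
have g_lip x y : `|g x - g y| <= (n%:R + 1) * `|x - y|.
  have -> : g x - g y = (soft_l1 z (lam + x) - soft_l1 z (lam + y)) - (x - y) by rewrite /g; ring.
  apply: (le_trans (ler_normB _ _)); rewrite mulrDl mul1r lerD2r.
  by have := soft_l1_lipschitz z (lam + x) (lam + y); rewrite opprD addrACA subrr add0r.
have g_cont : continuous g by apply: lipschitz_continuous g_lip; rewrite addr_ge0.
have g0 : 0 < g 0 by rewrite /g addr0; lra.
have glam : g lam <= 0 by rewrite /g -mulr2n -mulr_natl; lra.
have [a] := @IVT _ g 0 lam 0 (ltW lam_gt0) (continuous_subspaceT g_cont)
  (ltac:(rewrite ge_min le_max; apply/andP; split; apply/orP; [right | left]; lra)).
rewrite in_itv /= => /andP[a_ge0 a_le] ga0.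
exists a; split => //; last by move: ga0; rewrite /g; lra.
rewrite lt_def a_ge0 andbT; apply/eqP => a_eq0.
by move: ga0; rewrite a_eq0 => g0_eq0; move: g0; rewrite g0_eq0 ltxx.
Qed.

Section Thresholds.
Variables (R : realType) (n : nat) (z : 'I_n -> R) (w : R).

Lemma soft_l1_gt_of_lt_tlam1 lam : 0 <= lam ->
  (lam%:E < tlam1 w z)%E -> w < soft_l1 z lam + lam.
Proof.
move=> lam_ge0 lt_t1; rewrite ltNge; apply: contraTN lt_t1 => lam_in; rewrite -leNgt.
by apply: ereal_inf_lbound; exists lam => //; split => //; rewrite l1norm_softv.
Qed.

Lemma soft_l1_le_of_tlam1_le lam : 0 <= lam -> lam <= w -> linfnorm z <= w ->
  (tlam1 w z <= lam%:E)%E -> soft_l1 z lam + lam <= w.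
Proof.
move=> lam_ge0 lam_le zw t1_le; rewrite leNgt; apply/negP => lam_out.
have h_lip x y : `|(soft_l1 z x + x - w) - (soft_l1 z y + y - w)| <= (n%:R + 1) * `|x - y|.
  have -> : soft_l1 z x + x - w - (soft_l1 z y + y - w)
      = (soft_l1 z x - soft_l1 z y) + (x - y) by ring.
  by apply: (le_trans (ler_normD _ _)); rewrite mulrDl mul1r lerD2r soft_l1_lipschitz.
have [d d_gt0 near_out] := @lipschitz_gt_near _ (fun x => soft_l1 z x + x - w) _ lam 0
  (addr_ge0 (ler0n _ n) ler01) h_lip (ltac:(by rewrite subr_gt0)).
have /ereal_inf_lt[_ [l [l_ge0 l_in] <-]] : (tlam1 w z < (lam + d)%:E)%E.
  by apply: (le_lt_trans t1_le); rewrite lte_fin ltrDl.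
rewrite lte_fin => l_lt; rewrite l1norm_softv // in l_in.
have [l_le|lam_lt] := leP l lam.
  by have := soft_l1_add_le_between zw l_le lam_le l_in; lra.
by have := near_out l (ltac:(rewrite ler_distlC; apply/andP; split; lra)); lra.
Qed.

Lemma soft_l1_ge_of_lt_tlam3 lam : 0 <= lam ->
  (lam%:E < tlam3 w z)%E -> w <= soft_l1 z (2 * lam).
Proof.
move=> lam_ge0 /ereal_sup_gt[_ [l [l_ge0 l_in] <-]]; rewrite lte_fin => lam_lt.
rewrite l1norm_softv in l_in; last by rewrite mulr_ge0.
by apply: (le_trans l_in); apply: soft_l1_nonincreasing; lra.
Qed.

Lemma soft_l1_le_of_tlam3_le lam : 0 <= lam ->
  (tlam3 w z <= lam%:E)%E -> soft_l1 z (2 * lam) <= w.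
Proof.
move=> lam_ge0 t3_le; rewrite leNgt; apply/negP => lam_in.
have k_lip x y : `|soft_l1 z (2 * x) - soft_l1 z (2 * y)| <= (2 * n%:R) * `|x - y|.
  have -> : 2 * n%:R * `|x - y| = n%:R * `|2 * x - 2 * y|.
    by rewrite -mulrBr normrM (ger0_norm (ler0n _ 2)); ring.
  exact: soft_l1_lipschitz.
have [d d_gt0 near_in] := @lipschitz_gt_near _ (fun x => soft_l1 z (2 * x)) _ lam w
  (mulr_ge0 (ler0n _ 2) (ler0n _ n)) k_lip lam_in.
have : ((lam + d)%:E <= tlam3 w z)%E.
  apply: ereal_sup_ubound; exists (lam + d) => //; split; first lra.
  rewrite l1norm_softv; last lra.
  by apply/ltW/near_in; rewrite opprD addrA subrr sub0r normrN gtr0_norm.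
by move=> /le_trans /(_ t3_le); rewrite lee_fin; lra.
Qed.

End Thresholds.

Section Solution.
Variables (R : realType) (n : nat) (w lam : R) (z : 'I_n -> R).
Variables (bp bm : R) (th : 'I_n -> R).
Hypothesis sol : is_solution w z lam bp bm th.

Lemma solution_eq0 : 0 <= w -> w <= lam -> w + linfnorm z <= 2 * lam ->
  bp - bm = 0 /\ th = (fun _ => 0).
Proof.
move=> w_ge0 w_le lam_ge.
have l1norm0 : l1norm (fun _ : 'I_n => 0 : R) = 0.
  by rewrite /l1norm big1 // => i _; rewrite normr0.
have res_le i : `|z i - 0| <= linfnorm z.
  by rewrite subr0 (le_bigmax _ (fun i => `|z i|)).
have res_subgrad i : (z i - 0) * 0 = linfnorm z * `|0 : R|.
  by rewrite normr0 !mulr0.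
have vi (b s t : R) : `|b| <= t -> 0 <= s <= t ->
    0 <= - (w - (0 - 0)) * (b - (0 - 0)) + linfnorm z * (l1norm (fun _ : 'I_n => 0 : R) - s)
         + lam * (t - (0 + 0)) + lam * (s - l1norm (fun _ : 'I_n => 0 : R)).
  rewrite !l1norm0 ler_norml => /andP[b_ge b_le] /andP[s_ge0 s_le].
  have wb_le : w * b <= w * t by apply: ler_wpM2l.
  have [z_le|z_gt] := leP (linfnorm z) lam.
    have : 0 <= (lam - w) * t by apply: mulr_ge0; lra.
    have : 0 <= (lam - linfnorm z) * s by apply: mulr_ge0; lra.
    lra.
  have : 0 <= (2 * lam - w - linfnorm z) * t by apply: mulr_ge0; lra.
  have : 0 <= (linfnorm z - lam) * (t - s) by apply: mulr_ge0; lra.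
  lra.
have feas0 : feasible 0 0 (fun _ : 'I_n => 0 : R) by rewrite /feasible l1norm0 addr0 lexx.
by have := solution_eq_certificate res_le res_subgrad vi feas0 sol; rewrite subr0.
Qed.

(* The candidate has beta^+ + beta^- = t; the last hypothesis is complementary slackness
   for the constraints ||theta||_1 <= t and |beta| <= t. *)
Lemma solution_soft_shift a t : 0 <= a -> a <= lam ->
  0 <= w - lam + a -> w - lam + a <= t -> soft_l1 z (lam + a) <= t ->
  (lam - a) * (w - lam + a) + a * soft_l1 z (lam + a) = lam * t ->
  bp - bm = w - lam + a /\ th = softv z (lam + a).
Proof.
move=> a_ge0 a_le beta_ge0 beta_le l1_le slack.
have lam_a_ge0 : 0 <= lam + a by lra.
have l1_soft : l1norm (softv z (lam + a)) = soft_l1 z (lam + a) by rewrite l1norm_softv.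
have res_le i : `|z i - softv z (lam + a) i| <= lam + a by have [] := soft_residual (z i) lam_a_ge0.
have res_subgrad i : (z i - softv z (lam + a) i) * softv z (lam + a) i
    = (lam + a) * `|softv z (lam + a) i| by have [] := soft_residual (z i) lam_a_ge0.
pose b0 := (t + (w - lam + a)) / 2; pose m0 := (t - (w - lam + a)) / 2.
have b0_sub : b0 - m0 = w - lam + a by rewrite /b0 /m0; field.
have b0_add : b0 + m0 = t by rewrite /b0 /m0; field.
have vi (b s t' : R) : `|b| <= t' -> 0 <= s <= t' ->
    0 <= - (w - (b0 - m0)) * (b - (b0 - m0)) + (lam + a) * (l1norm (softv z (lam + a)) - s)
         + lam * (t' - (b0 + m0)) + lam * (s - l1norm (softv z (lam + a))).
  rewrite b0_sub b0_add l1_soft ler_norml => /andP[b_ge b_le] /andP[s_ge0 s_le].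
  have : 0 <= (lam - a) * (t' - b) by apply: mulr_ge0; lra.
  have : 0 <= a * (t' - s) by apply: mulr_ge0; lra.
  lra.
have feas0 : feasible b0 m0 (softv z (lam + a)).
  by rewrite /feasible l1_soft b0_add /b0 /m0; split; [|split]; lra.
by have := solution_eq_certificate res_le res_subgrad vi feas0 sol; rewrite b0_sub.
Qed.

Lemma solution_inactive : 0 <= lam -> soft_l1 z lam + lam <= w ->
  bp - bm = w - lam /\ th = softv z lam.
Proof.
move=> lam_ge0 l1_le; have := soft_l1_ge0 z lam.
have := solution_soft_shift (a := 0) (t := w - lam) (lexx 0) lam_ge0.
rewrite !addr0 subr0 mul0r addr0 => shift F_ge0; apply: shift => //; lra.
Qed.

Lemma solution_active : 0 < lam -> w < soft_l1 z lam + lam -> soft_l1 z (2 * lam) <= w ->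
  exists alpha, 0 < alpha /\ bp - bm = w - lam + alpha /\ th = softv z (lam + alpha).
Proof.
move=> lam_gt0 at0 atlam; have [a [a_gt0 a_le root]] := soft_l1_shift_root lam_gt0 at0 atlam.
have F_ge0 := soft_l1_ge0 z (lam + a).
have [beta_eq th_eq] : bp - bm = w - lam + a /\ th = softv z (lam + a).
  by apply: (solution_soft_shift (t := w - lam + a)); rewrite ?root //; try lra; ring.
by exists a.
Qed.

Lemma solution_beta_eq_w : 0 <= w -> 0 <= lam -> w <= soft_l1 z (2 * lam) ->
  bp - bm = w /\ th = softv z (2 * lam).
Proof.
move=> w_ge0 lam_ge0 w_le; have := soft_l1_ge0 z (2 * lam).
have := solution_soft_shift (a := lam) (t := soft_l1 z (2 * lam)) lam_ge0 (lexx lam).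
have -> : lam + lam = 2 * lam by ring.
rewrite subrr mul0r add0r subrK => shift F_ge0; apply: shift => //; lra.
Qed.

End Solution.

Unset Implicit Arguments.

Theorem proposition1 (R : realType) (p : nat) (hp : (2 <= p)%N) (w : R)
  (hw : 0 <= w) (z : 'I_p.-1 -> R) (lam : R) (hlam : 0 < lam)
  (bp bm : R) (th : 'I_p.-1 -> R) (hsol : is_solution w z lam bp bm th) :
  let beta := bp - bm in
  (* 1. big main effect *)
  (linfnorm z <= l1norm z < w ->
     (w <= lam -> beta = 0 /\ th = (fun _ => 0)) /\
     ((tlam1 w z <= lam%:E)%E -> lam < w ->
        beta = w - lam /\ th = softv z lam) /\
     ((lam%:E < tlam1 w z)%E ->
        exists alpha : R, 0 < alpha /\ beta = w - lam + alpha /\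
          th = softv z (lam + alpha))) /\
  (* 2. moderate main effect *)
  (linfnorm z <= w <= l1norm z ->
     (w <= lam -> beta = 0 /\ th = (fun _ => 0)) /\
     ((tlam1 w z <= lam%:E)%E -> lam < w ->
        beta = w - lam /\ th = softv z lam) /\
     ((tlam3 w z <= lam%:E)%E -> (lam%:E < tlam1 w z)%E ->
        exists alpha : R, 0 < alpha /\ beta = w - lam + alpha /\
          th = softv z (lam + alpha)) /\
     ((lam%:E < tlam3 w z)%E -> beta = w /\ th = softv z (2 * lam))) /\
  (* 3. big interaction *)
  (w < linfnorm z <= l1norm z ->
     (tlam4 w z <= lam -> beta = 0 /\ th = (fun _ => 0)) /\
     ((tlam3 w z <= lam%:E)%E -> lam < tlam4 w z ->
        exists alpha : R, 0 < alpha /\ beta = w - lam + alpha /\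
          th = softv z (lam + alpha)) /\
     ((lam%:E < tlam3 w z)%E -> beta = w /\ th = softv z (2 * lam))).
Proof.
(* Neither [hp] nor, in the third case, the bound [lam < tlam4] is needed. *)
move=> beta; rewrite {}/beta; have lam_ge0 := ltW hlam.
have l1_2lam : soft_l1 z (2 * lam) <= l1norm z.
  by rewrite -soft_l1_0; apply: soft_l1_nonincreasing; lra.
split; [|split].
- move=> /andP[zinf_le zl1_lt]; split; [|split].
  + by move=> w_le; apply: (solution_eq0 hsol) => //; lra.
  + move=> t1_le lam_lt; apply: (solution_inactive hsol) => //.
    by apply: soft_l1_le_of_tlam1_le => //; lra.
  + move=> lt_t1; apply: (solution_active hsol) => //; last lra.
    exact: soft_l1_gt_of_lt_tlam1.
- move=> /andP[zinf_le w_le_l1]; split; [|split; [|split]].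
  + by move=> w_le; apply: (solution_eq0 hsol) => //; lra.
  + move=> t1_le lam_lt; apply: (solution_inactive hsol) => //.
    by apply: soft_l1_le_of_tlam1_le => //; lra.
  + move=> t3_le lt_t1; apply: (solution_active hsol) => //.
    * exact: soft_l1_gt_of_lt_tlam1.
    * exact: soft_l1_le_of_tlam3_le.
  + by move=> lt_t3; apply: (solution_beta_eq_w hsol) => //; apply: soft_l1_ge_of_lt_tlam3.
- move=> /andP[w_lt _]; split; [|split].
  + by rewrite /tlam4 => t4_le; apply: (solution_eq0 hsol) => //; lra.
  + move=> t3_le _; apply: (solution_active hsol) => //.
    * by have := linfnorm_le_soft_l1 z lam_ge0; lra.
    * exact: soft_l1_le_of_tlam3_le.
  + by move=> lt_t3; apply: (solution_beta_eq_w hsol) => //; apply: soft_l1_ge_of_lt_tlam3.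
Qed.
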